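(* Let $(g;\Gamma)$ be a solution of the $(1,2)$-AlgDOP problem over $\mathbb{C}$ which cannot be reduced to a solution of the $(1,1)$-AlgDOP problem by a $(1,2)$-admissible change of variables, and suppose $\Gamma=y(y-p_1(x))(y-p_2(x))$ for polynomials $p_1,p_2$. Then the polynomial $p_1p_2$ has at most two distinct complex roots.
   Context: For positive reals $\mathbf w=(w_1,\dots,w_d)$, $\deg_{\mathbf w}(\sum_k a_kx^k)=\max_{a_k\ne0}\sum_i w_ik_i$, and $\mathcal P_{\mathbf w}(n;\mathbb K)$ denotes polynomials over $\mathbb K$ of $\mathbf w$-degree $\le n$. A solution of the $\mathbf w$-AlgDOP problem over $\mathbb K$ is a pair $(g,\Gamma)$, $g=(g^{ij})$ a symmetric matrix of polynomials, $\Gamma$ a polynomial, with (A1) $g^{ij}\in\mathcal P_{\mathbf w}(w_i+w_j;\mathbb K)$; (A2) $\det g\not\equiv0$ and $\Gamma$ is a square-free factor of $\det g$; (A3) $\Gamma$ divides $\sum_j g^{ij}\partial_j\Gamma$ for each $i$. In dimension 2: variables $(x,y)$, $\mathbf w=(1,w)$. A $(1,2)$-admissible change of variables is $\Phi:(x,y)\mapsto(\alpha x+\beta,\gamma y+p(x))$ with $\alpha\gamma\ne0$, $\deg p\le2$; it maps $(g,\Gamma)$ to $(\Phi_*g,\Gamma\circ\Phi^{-1})$, $\Phi_*g$ the pushforward as a contravariant 2-tensor. *)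

(* Polynomials in (x,y) over C are represented as {poly {poly C}}:
   the outer variable is y ('X), the inner variable is x (('X)%:P). *)
From HB Require Import structures.
From mathcomp Require Import all_boot all_order all_algebra.
From mathcomp Require Import complex.
From mathcomp Require Import Rstruct.
Set Implicit Arguments. Unset Strict Implicit. Unset Printing Implicit Defensive.
Import Order.TTheory GRing.Theory Num.Theory.
Local Open Scope ring_scope.

Notation C := (complex Rdefinitions.R).

Notation P2 := {poly {poly C}}.

Definition X2 : P2 := ('X)%:P.
Definition Y2 : P2 := 'X.

Definition coef2 (f : P2) (i j : nat) : C := (f`_j)`_i.

Definition inPw (w : nat) (n : nat) (f : P2) : Prop :=
  forall i j, coef2 f i j != 0 -> (i + w * j <= n)%N.

Definition wt (w : nat) (i : 'I_2) : nat := if val i == 0%N then 1%N else w.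

Definition dx (f : P2) : P2 := map_poly (fun q : {poly C} => q^`()) f.
Definition dy (f : P2) : P2 := f^`().
Definition dpart (j : 'I_2) (f : P2) : P2 := if val j == 0%N then dx f else dy f.

Definition dvd2 (a b : P2) : Prop := exists c : P2, b = a * c.

Definition squarefree2 (f : P2) : Prop :=
  forall h : P2, dvd2 (h * h) f -> h \is a GRing.unit.

Definition AlgDOP_solution (w : nat) (g : 'M[P2]_2) (Gamma : P2) : Prop :=
  [/\ g^T = g,
      (* (A1) *) (forall i j : 'I_2, inPw w (wt w i + wt w j) (g i j)),
      (* (A2) *) \det g != 0 /\ dvd2 Gamma (\det g) /\ squarefree2 Gamma &
      (* (A3) *) (forall i : 'I_2, dvd2 Gamma (\sum_(j < 2) g i j * dpart j Gamma))].

(* substitution f(x,y) |-> f(a(x), b(x,y)) *)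
Definition subst2 (a : {poly C}) (b : P2) (f : P2) : P2 :=
  (map_poly (fun q : {poly C} => q \Po a) f) \Po b.

(* The (1,2)-admissible change of variables
   Phi(x,y) = (al x + be, ga y + p(x)),  al ga <> 0, deg p <= 2.
   Its inverse is Phi^{-1}(x,y) = (ainv(x), binv(x,y)) with: *)
Definition ainv (al be : C) : {poly C} := al^-1 *: ('X - be%:P).
Definition binv (al be ga : C) (p : {poly C}) : P2 :=
  (ga^-1)%:P%:P * (Y2 - (p \Po ainv al be)%:P).

(* Jacobian matrix J^i_k = d Phi^i / d x^k *)
Definition jacPhi (al ga : C) (p : {poly C}) : 'M[P2]_2 :=
  \matrix_(i < 2, k < 2)
    if val i == 0%N then (if val k == 0%N then al%:P%:P else 0)
    else (if val k == 0%N then (p^`())%:P else ga%:P%:P).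

(* pushforward of the contravariant 2-tensor g:
   (Phi_* g)^{ij}(u) = J^i_k(Phi^{-1} u) J^j_l(Phi^{-1} u) g^{kl}(Phi^{-1} u) *)
Definition pushPhi (al be ga : C) (p : {poly C}) (g : 'M[P2]_2) : 'M[P2]_2 :=
  map_mx (subst2 (ainv al be) (binv al be ga p))
    (jacPhi al ga p *m g *m (jacPhi al ga p)^T).

Definition pullGamma (al be ga : C) (p : {poly C}) (Gamma : P2) : P2 :=
  subst2 (ainv al be) (binv al be ga p) Gamma.

Definition admissible12 (al be ga : C) (p : {poly C}) : Prop :=
  al != 0 /\ ga != 0 /\ (size p <= 3)%N.

Definition reducible_to_11 (g : 'M[P2]_2) (Gamma : P2) : Prop :=
  exists (al be ga : C) (p : {poly C}),
    admissible12 al be ga p /\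
    AlgDOP_solution 1 (pushPhi al be ga p g) (pullGamma al be ga p Gamma).

From HB Require Import structures.
From mathcomp Require Import all_boot all_order all_algebra.
From mathcomp Require Import complex Rstruct.
From mathcomp Require Import ring.
Import Order.TTheory GRing.Theory Num.Theory.
Local Open Scope ring_scope.

(* Condition (A3) says that each row (g^i0, g^i1)
   of g, read as a vector field, is tangent to the three curves y = 0, y = p1(x) and
   y = p2(x): on y = e it satisfies g^i1(x, e) = e'(x) g^i0(x, e).  The weighted degree
   bounds give g^00 = q + D y with deg q <= 2, g^01 = c y and g^11 = b y + a y^2.
   Along y = p the first row yields p' q = p (c - p' D), so every root of p (a root of
   multiplicity m of p is one of multiplicity m - 1 of p') is a root of q, which has
   at most two roots unless q = 0.  If q = 0, tangency of both rows along y = p1 and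
   y = p2 forces D a = 0 and D b = c^2, whence det g = D y (b y + a y^2) - c^2 y^2 = 0,
   contradicting (A2). *)

Lemma map_poly_derivM {R : nzRingType} (f h : {poly {poly R}}) :
  map_poly deriv (f * h) = map_poly deriv f * h + f * map_poly deriv h.
Proof.
apply/polyP=> i; rewrite coefD !coef_map /= !coefM raddf_sum -big_split /=.
by apply: eq_bigr => j _; rewrite derivM !coef_map.
Qed.

Lemma map_poly_derivX {R : nzRingType} : map_poly deriv 'X = 0 :> {poly {poly R}}.
Proof.
apply/polyP=> i; rewrite coef_map /= coefX coef0.
by case: (i == 1)%N; rewrite ?derivC ?deriv0.
Qed.

Lemma size2_polyE {R : nzRingType} (f : {poly R}) :
  (size f <= 2)%N -> f = (f`_0)%:P + (f`_1)%:P * 'X.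
Proof.
move=> sf; apply/polyP=> [[|[|j]]]; rewrite coefD coefC coefMX /= ?coefC ?addr0 ?add0r //.
by rewrite nth_default // (leq_trans sf).
Qed.

Lemma size3_polyE {R : nzRingType} (f : {poly R}) :
  (size f <= 3)%N -> f = (f`_0)%:P + (f`_1)%:P * 'X + (f`_2)%:P * 'X^2.
Proof.
move=> sf; apply/polyP=> [[|[|[|j]]]]; rewrite !coefD coefC coefMX coefMXn /=.
all: rewrite ?coefC /= ?add0r ?addr0 //.
by rewrite nth_default // (leq_trans sf).
Qed.

Lemma det_mx2 {R : comNzRingType} (A : 'M[R]_2) :
  \det A = A 0 0 * A 1 1 - A 0 1 * A 1 0.
Proof.
rewrite (expand_det_row _ 0) !big_ord_recl big_ord0 /cofactor !det_mx11 !mxE /=.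
have -> : lift (0 : 'I_2) (0 : 'I_1) = 1 by apply: val_inj.
have -> : lift (1 : 'I_2) (0 : 'I_1) = 0 by apply: val_inj.
by rewrite expr0 expr1 !mul1r mulN1r addr0 mulrN.
Qed.

Lemma XsubC_not_unit {R : idomainType} (c : R) : ~~ ('X - c%:P \is a GRing.unit).
Proof. by rewrite poly_unitE size_XsubC. Qed.

Lemma root_of_dvd_deriv_mul {R : numDomainType} {p q : {poly R}} {z : R} :
  p != 0 -> p %| p^`() * q -> root p z -> root q z.
Proof.
move=> p_neq0 dvd_p pz; have [[|k] [u]] := multiplicity_XsubC p z; rewrite p_neq0 /=.
  by rewrite expr0 mulr1 => /negP uz Ep; rewrite Ep in pz.
move=> uz Ep; set X := 'X - z%:P in Ep.
have Ep2 : p = X ^+ k * (X * u) by rewrite Ep exprSr; ring.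
have Ep' : p^`() = X ^+ k * (u^`() * X + u *+ k.+1).
  by rewrite Ep derivM deriv_exp derivXsubC mul1r exprS; ring.
move: dvd_p; rewrite {1}Ep2 Ep' -mulrA dvdp_mul2l ?expf_neq0 ?polyXsubC_eq0 // => dvd_p.
have : X %| (u^`() * X + u *+ k.+1) * q by apply: dvdp_trans dvd_p; apply: dvdp_mulIl.
rewrite dvdp_XsubCl rootM => /orP[|//].
by rewrite /root !hornerE subrr mulr0 add0r hornerMn mulrn_eq0 -/(root u z) (negbTE uz).
Qed.

Lemma roots_in_seq {F : closedFieldType} {q : {poly F}} :
  q != 0 -> exists2 s : seq F, size s = (size q).-1 & forall z, root q z -> z \in s.
Proof.
move=> q_neq0; have [s Eq] := closed_field_poly_normal q.
have lc_neq0 : lead_coef q != 0 by rewrite lead_coef_eq0.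
exists s => [|z]; first by rewrite Eq size_scale // size_prod_XsubC.
by rewrite {1}Eq rootZ // root_prod_XsubC.
Qed.

Lemma horner_tangent {R : idomainType} {a b k H : {poly {poly R}}} {e : {poly R}} :
  H.[e] != 0 ->
  a * map_poly deriv (('X - e%:P) * H) + b * (('X - e%:P) * H)^`() =
    ('X - e%:P) * H * k ->
  b.[e] = e^`() * a.[e].
Proof.
(* At y = e the right-hand side vanishes and the left one is H(e) (b(e) - e' a(e)). *)
move=> He /(congr1 (horner^~ e)).
rewrite map_poly_derivM derivM derivXsubC raddfB /= map_poly_derivX map_polyC /=.
rewrite !hornerE subrr !(mul0r, mulr0, add0r, addr0) => E.
have : H.[e] * (b.[e] - e^`() * a.[e]) = 0 by rewrite -E; ring.
by move/eqP; rewrite mulf_eq0 (negbTE He) subr_eq0 => /eqP.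
Qed.

Lemma tangent_three_lines {R : idomainType} {p1 p2 : {poly R}} {a b k : {poly {poly R}}} :
  p1 != 0 -> p2 != 0 -> p1 != p2 ->
  a * map_poly deriv ('X * ('X - p1%:P) * ('X - p2%:P)) +
    b * ('X * ('X - p1%:P) * ('X - p2%:P))^`() =
    'X * ('X - p1%:P) * ('X - p2%:P) * k ->
  [/\ b.[0] = 0, b.[p1] = p1^`() * a.[p1] & b.[p2] = p2^`() * a.[p2]].
Proof.
move=> p1_neq0 p2_neq0 p12; set G := _ * _ * _ => Ek.
have tangent e H : G = ('X - e%:P) * H -> H.[e] != 0 -> b.[e] = e^`() * a.[e].
  by move=> EG He; apply: (horner_tangent He); rewrite -EG; exact: Ek.
have p21 : p2 != p1 by rewrite eq_sym.
split.
- rewrite (tangent 0 (('X - p1%:P) * ('X - p2%:P))) ?derivC ?mul0r //.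
    by rewrite /G polyC0 subr0 mulrA.
  by rewrite !hornerE mulf_neq0 ?oppr_eq0.
- apply: (tangent _ ('X * ('X - p2%:P))); first by rewrite /G; ring.
  by rewrite !hornerE mulf_neq0 ?subr_eq0.
- apply: (tangent _ ('X * ('X - p1%:P))); first by rewrite /G; ring.
  by rewrite !hornerE mulf_neq0 ?subr_eq0.
Qed.

Lemma affine_eq0 {S : idomainType} {a b x y : S} :
  x != y -> a + b * x = 0 -> a + b * y = 0 -> a = 0 /\ b = 0.
Proof.
move=> xy Ex Ey; have : b * (x - y) = (a + b * x) - (a + b * y) by ring.
rewrite Ex Ey subrr => /eqP; rewrite mulf_eq0 subr_eq0 (negbTE xy) orbF => /eqP b0.
by move: Ex; rewrite b0 mul0r addr0.
Qed.

Lemma affine_tangent_coef0 {S : comNzRingType} {f h : {poly S}} {e d : S} :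
  (size f <= 2)%N -> (size h <= 2)%N -> h.[0] = 0 -> h.[e] = d * f.[e] ->
  d * f`_0 = e * (h`_1 - d * f`_1).
Proof.
move=> /size2_polyE Ef /size2_polyE Eh; rewrite horner_coef0 => h0.
rewrite {1}Eh {1}Ef h0 !hornerE => E.
by transitivity (d * (f`_0 + f`_1 * e) - d * f`_1 * e); [ring | rewrite -E; ring].
Qed.

Lemma tangent_det_eq0 {S : idomainType} {f h u : {poly S}} {p1 p2 d1 d2 : S} :
  (size f <= 2)%N -> (size h <= 2)%N -> (size u <= 3)%N ->
  p1 != 0 -> p2 != 0 -> p1 != p2 ->
  f.[0] = 0 -> h.[0] = 0 -> u.[0] = 0 ->
  h.[p1] = d1 * f.[p1] -> h.[p2] = d2 * f.[p2] ->
  u.[p1] = d1 * h.[p1] -> u.[p2] = d2 * h.[p2] ->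
  f * u - h * h = 0.
Proof.
move=> /size2_polyE Ef /size2_polyE Eh /size3_polyE Eu p1_neq0 p2_neq0 p12.
rewrite !horner_coef0 => f0 h0 u0.
rewrite Ef Eh Eu f0 h0 u0 !polyC0 !add0r !(hornerD, hornerCM, hornerX, hornerXn).
set D := f`_1; set c := h`_1; set b := u`_1; set a := u`_2.
have tangent x d : x != 0 -> c * x = d * (D * x) -> b * x + a * x ^+ 2 = d * (c * x) ->
    (D * b - c * c) + D * a * x = 0.
  move=> x_neq0; rewrite mulrA => /(mulIf x_neq0) Ec.
  rewrite expr2 mulrA -mulrDl mulrA => /(mulIf x_neq0) Eb.
  transitivity (D * (b + a * x) - c * c); first ring.
  by rewrite Eb mulrA [D * d]mulrC -Ec subrr.
move=> h1 h2 u1 u2.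
have [Dbc Da] := affine_eq0 p12 (tangent _ _ p1_neq0 h1 u1) (tangent _ _ p2_neq0 h2 u2).
transitivity ((D * b - c * c)%:P * 'X^2 + (D * a)%:P * 'X^3).
  by rewrite polyCB !polyCM; ring.
by rewrite Dbc Da !mul0r addr0.
Qed.

Lemma squarefree_three_lines {p1 p2 : {poly C}} :
  squarefree2 (Y2 * (Y2 - p1%:P) * (Y2 - p2%:P)) -> [/\ p1 != 0, p2 != 0 & p1 != p2].
Proof.
rewrite /Y2 => sqf; have no_double_line (e : {poly C}) (h : P2) :
    'X * ('X - p1%:P) * ('X - p2%:P) <> ('X - e%:P) * ('X - e%:P) * h.
  by move=> E; case/negP: (XsubC_not_unit e); apply: sqf; exists h.
split; apply/eqP => E.
- by apply: (no_double_line 0 ('X - p2%:P)); rewrite E polyC0 subr0.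
- by apply: (no_double_line 0 ('X - p1%:P)); rewrite E polyC0 subr0; ring.
- by apply: (no_double_line p1 'X); rewrite E; ring.
Qed.

Lemma AlgDOP_row_tangent {g : 'M[P2]_2} {p1 p2 : {poly C}} {i : 'I_2} :
  p1 != 0 -> p2 != 0 -> p1 != p2 ->
  let Gamma := Y2 * (Y2 - p1%:P) * (Y2 - p2%:P) in
  dvd2 Gamma (\sum_(j < 2) g i j * dpart j Gamma) ->
  [/\ (g i 1).[0] = 0, (g i 1).[p1] = p1^`() * (g i 0).[p1]
    & (g i 1).[p2] = p2^`() * (g i 0).[p2]].
Proof.
move=> p1_neq0 p2_neq0 p12 Gamma [k]; rewrite !big_ord_recl big_ord0 addr0 /dpart /=.
have -> : lift ord0 ord0 = 1 :> 'I_2 by apply: val_inj.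
exact: tangent_three_lines.
Qed.

Lemma inPw_size {w n k : nat} {f : P2} : inPw w n f -> (n < w * k)%N -> (size f <= k)%N.
Proof.
move=> Hf ltn; apply/leq_sizeP => j le_kj; apply/polyP => i; rewrite coef0.
apply/eqP; apply: contraT => /Hf le_n.
have := leq_trans (leq_trans ltn (leq_mul (leqnn w) le_kj)) (leq_trans (leq_addl i _) le_n).
by rewrite ltnn.
Qed.

Lemma inPw_size_coef0 {w n : nat} {f : P2} : inPw w n f -> (size (f`_0)%R <= n.+1)%N.
Proof.
move=> Hf; apply/leq_sizeP => i le_ni; apply/eqP; apply: contraT => /Hf.
by rewrite muln0 addn0 leqNgt le_ni.
Qed.

Theorem lemma5p6 (g : 'M[P2]_2) (Gamma : P2) (p1 p2 : {poly C}) :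
  AlgDOP_solution 2 g Gamma ->
  ~ reducible_to_11 g Gamma ->
  Gamma = Y2 * (Y2 - p1%:P) * (Y2 - p2%:P) ->
  exists s : seq C, (size s <= 2)%N /\ (forall z : C, root (p1 * p2) z -> z \in s).
Proof.
move=> [gT A1 [det_neq0 [_ sqf]] A3] _ EGamma; subst Gamma.
have [p1_neq0 p2_neq0 p12] := squarefree_three_lines sqf.
have g10 : g 1 0 = g 0 1 by rewrite -{1}gT mxE.
have [t01_0 t01_1 t01_2] := AlgDOP_row_tangent p1_neq0 p2_neq0 p12 (A3 0).
have [t11_0 t11_1 t11_2] := AlgDOP_row_tangent p1_neq0 p2_neq0 p12 (A3 1).
rewrite g10 in t11_1 t11_2.
have size00 : (size (g 0 0)%R <= 2)%N by apply: (inPw_size (A1 0 0)).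
have size01 : (size (g 0 1)%R <= 2)%N by apply: (inPw_size (A1 0 1)).
have size11 : (size (g 1 1)%R <= 3)%N by apply: (inPw_size (A1 1 1)).
have [q0 | q_neq0] := eqVneq (g 0 0).[0] 0.
  case/eqP: det_neq0; rewrite det_mx2 g10.
  exact: (tangent_det_eq0 size00 size01 size11 p1_neq0 p2_neq0 p12 q0 t01_0 t11_0
                          t01_1 t01_2 t11_1 t11_2).
rewrite horner_coef0 in q_neq0; have [s size_s roots_s] := roots_in_seq q_neq0.
exists s; split.
  by rewrite size_s -ltnS prednK ?size_poly_gt0 //; apply: inPw_size_coef0 (A1 0 0).
move=> z; rewrite rootM => /orP[] rz; apply: roots_s.
- apply: (root_of_dvd_deriv_mul p1_neq0 _ rz).
  by rewrite (affine_tangent_coef0 size00 size01 t01_0 t01_1) dvdp_mulr.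
- apply: (root_of_dvd_deriv_mul p2_neq0 _ rz).
  by rewrite (affine_tangent_coef0 size00 size01 t01_0 t01_2) dvdp_mulr.
Qed.
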